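(* Let $\mathcal H$ be a finite-dimensional Hilbert space, $\rho=|\psi\rangle\langle\psi|$ a pure state, and let $\mathcal S=\{\rho,\sigma^{(1)},\dots,\sigma^{(n)}\}$ be a medium consistent family of histories. Then there exists a medium consistent family $\mathcal S'=\{\rho,\sigma'^{(1)},\dots,\sigma'^{(n)}\}$ in which each $\sigma'^{(i)}=\{|\phi^{(i)}_j\rangle\langle\phi^{(i)}_j|\}_j$ consists of rank-1 projectors and is a fine graining of $\sigma^{(i)}$.
   Context: A set of projectors $\sigma=\{P_\alpha\}_{\alpha=1,\dots,m}$ on $\mathcal H$ is exhaustive and exclusive if $\sum_\alpha P_\alpha=\mathbb 1$ and $P_\alpha P_\beta=\delta_{\alpha\beta}P_\alpha$. A family of histories $\{\rho,\sigma^{(1)},\dots,\sigma^{(n)}\}$ consists of an initial density matrix $\rho$ and exhaustive exclusive sets $\sigma^{(j)}=\{P^{(j)}_{\alpha_j}\}$ (Heisenberg-picture projectors at successive times $t_1<\dots<t_n$). A history is a tuple $\alpha=(\alpha_1,\dots,\alpha_n)$ with history operator $C_\alpha=P^{(1)}_{\alpha_1}\cdots P^{(n)}_{\alpha_n}$, probability $Pr(\alpha)=\mathrm{Tr}\{C_\alpha^\dagger\rho C_\alpha\}$ and coherence function $D(\alpha;\beta)=\mathrm{Tr}\{C_\alpha^\dagger\rho C_\beta\}$. The family is medium consistent if $D(\alpha;\beta)=\delta_{\alpha\beta}Pr(\alpha)$ for all histories $\alpha,\beta$. An exhaustive exclusive set $\sigma'$ is a fine graining of $\sigma$ if every projector of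 $\sigma$ is a sum of projectors of $\sigma'$ (equivalently $\sigma$ is a coarse graining of $\sigma'$). *)

(* Finite-dimensional Hilbert space = 'cV[C]_d over a
   numeric algebraically closed field C (e.g. algC, or R[i]). *)
From HB Require Import structures.
From mathcomp Require Import all_boot all_order all_algebra.
Set Implicit Arguments. Unset Strict Implicit. Unset Printing Implicit Defensive.
Import Order.TTheory GRing.Theory Num.Theory.
Local Open Scope ring_scope.

Section QH.
Variables (C : numClosedFieldType) (d : nat).

Definition adj (p q : nat) (A : 'M[C]_(p, q)) : 'M[C]_(q, p) :=
  (map_mx (@Num.conj C) A)^T.

Definition projector (P : 'M[C]_d) : Prop := P *m P = P /\ adj P = P.

Definition exh_excl (m : nat) (sigma : 'I_m -> 'M[C]_d) : Prop :=
  (forall a, projector (sigma a)) /\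
  \sum_(a < m) sigma a = 1%:M /\
  (forall a b, sigma a *m sigma b = if a == b then sigma a else 0).

(* a family of histories: n times, m j alternatives at time j *)
Definition history (n : nat) (m : 'I_n -> nat) := forall j : 'I_n, 'I_(m j).

Definition hist_op (n : nat) (m : 'I_n -> nat)
  (sigma : forall j : 'I_n, 'I_(m j) -> 'M[C]_d) (alpha : history m) : 'M[C]_d :=
  foldr (fun j acc => sigma j (alpha j) *m acc) 1%:M (enum 'I_n).

Definition coherence (n : nat) (m : 'I_n -> nat) (rho : 'M[C]_d)
  (sigma : forall j : 'I_n, 'I_(m j) -> 'M[C]_d) (alpha beta : history m) : C :=
  \tr (adj (hist_op sigma alpha) *m rho *m hist_op sigma beta).

Definition hist_prob (n : nat) (m : 'I_n -> nat) (rho : 'M[C]_d)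
  (sigma : forall j : 'I_n, 'I_(m j) -> 'M[C]_d) (alpha : history m) : C :=
  coherence rho sigma alpha alpha.

Definition medium_consistent (n : nat) (m : 'I_n -> nat) (rho : 'M[C]_d)
  (sigma : forall j : 'I_n, 'I_(m j) -> 'M[C]_d) : Prop :=
  (forall j, exh_excl (sigma j)) /\
  forall alpha beta : history m,
    (alpha = beta -> coherence rho sigma alpha beta = hist_prob rho sigma alpha) /\
    (alpha <> beta -> coherence rho sigma alpha beta = 0).

Definition fine_graining (m m' : nat) (sigma : 'I_m -> 'M[C]_d)
  (sigma' : 'I_m' -> 'M[C]_d) : Prop :=
  forall a, exists S : {set 'I_m'}, sigma a = \sum_(b in S) sigma' b.

End QH.

(* For the pure state psi psi^*, D(al; be) is the inner product of the branch
   vectors b_al = P^(n)_{al_n} ... P^(1)_{al_1} psi, so medium consistency says that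
   distinct histories have orthogonal branch vectors; summing over the later
   alternatives, the same holds for the truncated branch vectors of histories that
   already differ before time k.  Hence at each time j the truncated branch vectors
   are pairwise equal or orthogonal and each lies in the range of some P^(j)_a, so
   the P^(j)_a and the projectors onto these vectors commute and have a common
   orthonormal eigenbasis.  Its rank-one projectors fine-grain sigma^(j), and along
   the refined family every branch vector is either 0 or the branch vector of the
   coarse-grained history; two nonzero refined branches with the same
   coarse-graining come from the same fine history, so consistency is inherited. *)

From Stdlib Require Import FunctionalExtensionality.
From HB Require Import structures.
From mathcomp Require Import all_boot all_order all_algebra.
From mathcomp Require Import spectral.
Set Implicit Arguments. Unset Strict Implicit. Unset Printing Implicit Defensive.
Import Order.TTheory GRing.Theory Num.Theory.
Local Open Scope ring_scope.
Local Open Scope sesquilinear_scope.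

Section Adjoint.
Variable C : numClosedFieldType.
Implicit Types p q r : nat.

Lemma adjE p q (A : 'M[C]_(p, q)) : adj A = A ^t*.
Proof. by apply/matrixP => i j; rewrite !mxE. Qed.

Lemma adj_mul p q r (A : 'M[C]_(p, q)) (B : 'M[C]_(q, r)) :
  adj (A *m B) = adj B *m adj A.
Proof. by rewrite /adj map_mxM trmx_mul. Qed.

Lemma adjK p q (A : 'M[C]_(p, q)) : adj (adj A) = A.
Proof. by apply/matrixP => i j; rewrite !mxE conjCK. Qed.

Lemma adj0 p q : adj (0 : 'M[C]_(p, q)) = 0.
Proof. by rewrite /adj map_mx0 trmx0. Qed.

Lemma adj1mx p : adj (1%:M : 'M[C]_p) = 1%:M.
Proof. by rewrite /adj map_scalar_mx /= conjC1 tr_scalar_mx. Qed.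

Lemma adj_sum p q (I : finType) (F : I -> 'M[C]_(p, q)) :
  adj (\sum_i F i) = \sum_i adj (F i).
Proof. by rewrite /adj raddf_sum /= raddf_sum. Qed.

Lemma adj_col_mul p q (W : 'M[C]_(p, q)) c c' :
  adj (col c W) *m col c' W = ((adj W *m W) c c')%:M.
Proof.
apply/matrixP => i j; rewrite !ord1 !mxE eqxx mulr1n.
by apply: eq_bigr => k _; rewrite !mxE.
Qed.

Lemma adj_col_mul_unitary p q (W : 'M[C]_(p, q)) : adj W *m W = 1%:M ->
  forall c c', adj (col c W) *m col c' W = (c == c')%:R%:M.
Proof. by move=> W_unit c c'; rewrite adj_col_mul W_unit mxE. Qed.

Lemma exh_excl_adj d m (P : 'I_m -> 'M[C]_d) a : exh_excl P -> adj (P a) = P a.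
Proof. by move=> [/(_ a) []]. Qed.

Lemma trace_mx11_eq0 (M : 'M[C]_1) : \tr M = 0 -> M = 0.
Proof. by move=> trM0; rewrite [M]mx11_scalar -trace_mx11 trM0 raddf0. Qed.

End Adjoint.

Section Branches.
Variables (C : numClosedFieldType) (d n : nat) (m : 'I_n -> nat).
Variable psi : 'cV[C]_d.
Implicit Types (s : forall j : 'I_n, 'I_(m j) -> 'M[C]_d) (al be : history m).

(* [branch s al k] = s (k-1) (al (k-1)) ... s 0 (al 0) psi is the branch vector of
   the first k times of al (times are counted from 0); [time_op] is the identity
   past the last time. *)
Definition time_op s al (i : nat) : 'M[C]_d :=
  if (insub i : option 'I_n) is Some j then s j (al j) else 1%:M.

Fixpoint branch s al k : 'cV[C]_d :=
  if k is k'.+1 then time_op s al k' *m branch s al k' else psi.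

Lemma branchS s al (j : 'I_n) : branch s al j.+1 = s j (al j) *m branch s al j.
Proof. by rewrite /= /time_op valK. Qed.

Lemma branchS_ge s al k : (n <= k)%N -> branch s al k.+1 = branch s al k.
Proof. by move=> le_nk; rewrite /= /time_op insubN -?leqNgt // mul1mx. Qed.

Lemma branchS_fixed s al (j : 'I_n) : projector (s j (al j)) ->
  s j (al j) *m branch s al j.+1 = branch s al j.+1.
Proof. by move=> [idem _]; rewrite branchS mulmxA idem. Qed.

Lemma branchS_eq0 s al k : branch s al k = 0 -> branch s al k.+1 = 0.
Proof. by move=> /= ->; rewrite mulmx0. Qed.

Lemma branch_eq s al be k :
  (forall i : 'I_n, (i < k)%N -> al i = be i) -> branch s al k = branch s be k.
Proof.
elim: k => [//|k IHk] eq_alk /=.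
rewrite IHk => [|i lt_ik]; last by rewrite eq_alk // ltnS ltnW.
by rewrite /time_op; case: insubP => // i _ ik; rewrite eq_alk // ik.
Qed.

Lemma branch_foldl s al k :
  branch s al k = foldl (fun v i => time_op s al i *m v) psi (iota 0 k).
Proof.
elim: k => [//|k IHk].
by rewrite -[k.+1]addn1 iotaD cats1 foldl_rcons -IHk addn1.
Qed.

Lemma adj_hist_op_branch s al : (forall j a, adj (s j a) = s j a) ->
  adj (hist_op s al) *m psi = branch s al n.
Proof.
move=> s_herm.
have adj_foldr r v :
    adj (foldr (fun i M => time_op s al i *m M) 1%:M r) *m v =
    foldl (fun w i => time_op s al i *m w) v r.
  elim: r v => [|i r IHr] v /=; first by rewrite adj1mx mul1mx.
  rewrite adj_mul -mulmxA IHr /time_op.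
  by case: insubP => [j _ _|_]; rewrite ?s_herm ?adj1mx.
have -> : hist_op s al = foldr (fun i M => time_op s al i *m M) 1%:M (iota 0 n).
  rewrite -val_enum_ord foldr_map /hist_op.
  by elim: (enum 'I_n) => //= j r ->; rewrite /time_op valK.
by rewrite adj_foldr branch_foldl.
Qed.

Lemma coherence_pure s al be : (forall j a, adj (s j a) = s j a) ->
  coherence (psi *m adj psi) s al be = \tr (adj (branch s be n) *m branch s al n).
Proof.
move=> s_herm; rewrite /coherence -!adj_hist_op_branch // adj_mul adjK.
by rewrite [RHS]mxtrace_mulC !mulmxA.
Qed.

Lemma medium_consistent_pure s : (forall j, exh_excl (s j)) ->
  medium_consistent (psi *m adj psi) s <->
  forall al be, al <> be -> adj (branch s be n) *m branch s al n = 0.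
Proof.
move=> s_ee; have s_herm j a : adj (s j a) = s j a by apply: exh_excl_adj.
split=> [[_ s_cons] al be ne_ab | orth].
  by apply/trace_mx11_eq0; rewrite -coherence_pure //; apply: (s_cons al be).2.
split=> // al be; split=> [-> // | /orth]; rewrite coherence_pure // => ->.
exact: mxtrace0.
Qed.

Definition same_prefix k al be := [forall i : 'I_n, (i < k)%N ==> (al i == be i)].

Lemma same_prefixP k al be :
  reflect (forall i : 'I_n, (i < k)%N -> al i = be i) (same_prefix k al be).
Proof.
apply: (iffP forallP) => [eq_ab i lt_ik | eq_ab i].
  exact/eqP/(implyP (eq_ab i)).
by apply/implyP => /eq_ab ->.
Qed.

Lemma branch_sum_next s al (j : 'I_n) : \sum_a s j a = 1%:M ->
  branch s al j = \sum_(a : 'I_(m j)) branch s (dfwith al a) j.+1.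
Proof.
move=> s_sum; rewrite -[LHS]mul1mx -s_sum mulmx_suml; apply: eq_bigr => a _.
rewrite branchS dfwith_in; congr (_ *m _); apply: branch_eq => i lt_ij.
by rewrite dfwith_out // -val_eqE /= gtn_eqF.
Qed.

Lemma branch_orthogonal_prefix s : (forall j, \sum_a s j a = 1%:M) ->
  (forall al be, al <> be -> adj (branch s be n) *m branch s al n = 0) ->
  forall k al be, (k <= n)%N -> ~~ same_prefix k al be ->
  adj (branch s be k) *m branch s al k = 0.
Proof.
(* Downward induction on k: by completeness, the branch at time k is the sum of
   its continuations to time k + 1. *)
move=> s_sum orth k al be /subnK; move: (n - k)%N => t.
elim: t k al be => [|t IHt] k al be.
  rewrite add0n => -> /same_prefixP ne_ab; apply: orth => eq_ab.
  by apply: ne_ab => i _; rewrite eq_ab.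
rewrite addSnnS => def_n ne_ab; have lt_kn : (k < n)%N by rewrite -def_n leq_addl.
rewrite (branch_sum_next al (s_sum (Ordinal lt_kn))).
rewrite (branch_sum_next be (s_sum (Ordinal lt_kn))).
rewrite adj_sum mulmx_suml big1 // => b _; rewrite mulmx_sumr big1 // => a _.
apply: IHt => //; apply: contra ne_ab => /same_prefixP eq_ab.
apply/same_prefixP => i lt_ik; have := eq_ab i (ltnW lt_ik).
by rewrite !dfwith_out // -val_eqE /= gtn_eqF.
Qed.

Lemma branch_eq_or_orthogonal s : (forall j, \sum_a s j a = 1%:M) ->
  (forall al be, al <> be -> adj (branch s be n) *m branch s al n = 0) ->
  forall k al be, (k <= n)%N ->
  branch s al k = branch s be k \/ adj (branch s al k) *m branch s be k = 0.
Proof.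
move=> s_sum orth k al be le_kn.
have [/same_prefixP eq_ba | ne_ba] := boolP (same_prefix k be al).
  by left; apply: branch_eq => i /eq_ba.
by right; apply: branch_orthogonal_prefix.
Qed.

End Branches.

Section Eigenbasis.
Variables (C : numClosedFieldType) (d : nat).
Implicit Types (A P : 'M[C]_d) (w x y : 'cV[C]_d).

Lemma hermitian_commuting_eigenbasis (As : seq 'M[C]_d) :
  {in As, forall A, adj A = A} -> {in As &, forall A B, comm_mx A B} ->
  exists W : 'M[C]_d, [/\ adj W *m W = 1%:M, W *m adj W = 1%:M &
    forall A c, A \in As -> exists l, A *m col c W = l *: col c W].
Proof.
(* Schur: each V A V^* is triangular and Hermitian, hence diagonal. *)
move=> As_herm /cotrigonalization [V V_unitary /allP V_trig].
have VV : V *m adj V = 1%:M by rewrite adjE; apply/unitarymxP.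
exists (adj V); rewrite adjK VV (mulmx1C VV); split=> // A c A_in.
pose T := V *m A *m adj V.
have T_herm : adj T = T by rewrite !adj_mul adjK As_herm // mulmxA.
have /is_trig_mxP T_trig : is_trig_mx T.
  by have := V_trig A A_in; rewrite /similar_to /= (conjymx A V_unitary) -adjE.
rewrite !colE mulmxA.
have -> : A *m adj V = adj V *m T by rewrite /T !mulmxA (mulmx1C VV) mul1mx.
clearbody T; have T_diag i j : i != j -> T i j = 0.
  rewrite neq_ltn => /orP[lt_ij | lt_ji]; first exact: T_trig.
  by rewrite -T_herm !mxE T_trig ?conjC0.
exists (T c c); rewrite -mulmxA scalemxAr; congr (_ *m _).
apply/matrixP => i j; rewrite !mxE (bigD1 c) //= big1 => [|k ne_kc].
  rewrite addr0 !mxE ord1 !eqxx mulr1 andbT.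
  by case: eqVneq => [-> | ne_ic]; rewrite ?mulr1 // mulr0 T_diag.
by rewrite mxE (negbTE ne_kc) mulr0.
Qed.

Lemma projector_eigenvector P w l :
  projector P -> P *m w = l *: w -> P *m w = 0 \/ P *m w = w.
Proof.
move=> [PP _] Pw; have [l0 | nz_l] := eqVneq l 0; first by left; rewrite Pw l0 scale0r.
right; have : l *: (l *: w) = l *: w by rewrite -Pw scalemxAr -Pw mulmxA PP.
move/eqP; rewrite -subr_eq0 -scalerBr scaler_eq0 (negbTE nz_l) subr_eq0 => /eqP.
by rewrite Pw.
Qed.

Lemma exh_excl_eigenvector (m : nat) (P : 'I_m -> 'M[C]_d) w :
  exh_excl P -> w != 0 -> (forall a, exists l, P a *m w = l *: w) ->
  exists a, P a *m w = w.
Proof.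
move=> [P_proj [P_sum _]] nz_w P_eig.
have [a /eqP Pa_w | no_a] := pickP [pred a | P a *m w == w]; first by exists a.
suff w0 : w = 0 by rewrite w0 eqxx in nz_w.
rewrite -[w]mul1mx -P_sum mulmx_suml big1 // => a _.
have [l /(projector_eigenvector (P_proj a)) [// | Pa_ww]] := P_eig a.
by move: (no_a a); rewrite /= Pa_ww eqxx.
Qed.

Definition along_or_orthogonal w x := adj w *m x = 0 \/ w *m (adj w *m x) = x.

Lemma rank_one_eigenvector x w l : adj w *m w = 1%:M ->
  x *m adj x *m w = l *: w -> along_or_orthogonal w x.
Proof.
move=> w_unit xxw; set z := (adj x *m w) 0 0.
have [z0 | nz_z] := eqVneq z 0.
  by left; rewrite -[x]adjK -adj_mul [adj x *m w]mx11_scalar -/z z0 raddf0 adj0.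
right; have -> : x = (l / z) *: w.
  apply: (scalerI nz_z); rewrite scalerA mulrCA divff // mulr1 -xxw.
  by rewrite -mulmxA [adj x *m w]mx11_scalar mul_mx_scalar.
by rewrite -!scalemxAr mulmxA -[w *m _ *m _]mulmxA w_unit mulmx1.
Qed.

Lemma comm_mx_rank_one P x : adj P = P -> P *m x = 0 \/ P *m x = x ->
  comm_mx P (x *m adj x).
Proof.
move=> P_herm Px; have adj_Px : adj x *m P = adj (P *m x) by rewrite adj_mul P_herm.
rewrite /comm_mx mulmxA -[RHS]mulmxA adj_Px.
by case: Px => ->; rewrite ?adj0 ?mul0mx ?mulmx0.
Qed.

Lemma comm_mx_rank_one_orthogonal x y : x = y \/ adj x *m y = 0 ->
  comm_mx (x *m adj x) (y *m adj y).
Proof.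
case=> [-> // | xy0]; have yx0 : adj y *m x = 0 by rewrite -[x]adjK -adj_mul xy0 adj0.
by rewrite /comm_mx -!mulmxA !(mulmxA (adj _)) xy0 yx0 !mul0mx !mulmx0.
Qed.

Lemma adapted_orthonormal_basis (m : nat) (P : 'I_m -> 'M[C]_d) (I : finType)
    (x : I -> 'cV[C]_d) :
  exh_excl P -> (forall i, exists a, P a *m x i = x i) ->
  (forall i i', x i = x i' \/ adj (x i) *m x i' = 0) ->
  exists W : 'M[C]_d, [/\ adj W *m W = 1%:M, W *m adj W = 1%:M,
    forall c, exists a, P a *m col c W = col c W &
    forall i c, along_or_orthogonal (col c W) (x i)].
Proof.
(* Diagonalize the P a together with the rank-one operators x i x i^*. *)
move=> P_ee x_in x_orth; have [_ [_ P_orth]] := P_ee.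
have P_herm a : adj (P a) = P a by apply: exh_excl_adj.
have P_x a i : P a *m x i = 0 \/ P a *m x i = x i.
  have [b <-] := x_in i; rewrite mulmxA P_orth.
  by case: eqP => [-> | _]; [right | left; rewrite mul0mx].
pose As := [seq P a | a <- enum 'I_m] ++ [seq x i *m adj (x i) | i <- enum I].
have As_herm : {in As, forall A, adj A = A}.
  move=> A; rewrite mem_cat => /orP[] /mapP[a _ ->] //.
  by rewrite adj_mul adjK.
have As_comm : {in As &, forall A B, comm_mx A B}.
  move=> A B; rewrite !mem_cat.
  move=> /orP[] /mapP[a _ ->] /orP[] /mapP[b _ ->].
  - by rewrite /comm_mx !P_orth eq_sym; case: eqP => [->|].
  - exact: comm_mx_rank_one.
  - by apply/esym/comm_mx_rank_one.
  - exact: comm_mx_rank_one_orthogonal.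
have [W [W_unit W_coisom W_eig]] := hermitian_commuting_eigenbasis As_herm As_comm.
have col_unit c : adj (col c W) *m col c W = 1%:M.
  by rewrite adj_col_mul_unitary ?eqxx.
exists W; split=> // [c | i c].
  apply: exh_excl_eigenvector => // [|a].
    apply: (contra_eq_neq _ (col_unit c)) => ->.
    by rewrite mulmx0 eq_sym matrix_nonzero1.
  by apply: W_eig; rewrite mem_cat map_f ?mem_enum.
have xx_in : x i *m adj (x i) \in As.
  by rewrite mem_cat; apply/orP; right; apply/mapP; exists i; rewrite ?mem_enum.
have [l] := W_eig _ c xx_in; exact: rank_one_eigenvector.
Qed.

Definition rank_one_family (W : 'M[C]_d) (c : 'I_d) : 'M[C]_d :=
  col c W *m adj (col c W).

Lemma sum_rank_one_family W : \sum_c rank_one_family W c = W *m adj W.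
Proof.
apply/matrixP => i j; rewrite summxE !mxE; apply: eq_bigr => c _.
by rewrite !mxE big_ord1 !mxE.
Qed.

Lemma exh_excl_rank_one_family W : adj W *m W = 1%:M -> W *m adj W = 1%:M ->
  exh_excl (rank_one_family W).
Proof.
move=> W_unit W_coisom.
have W_orth := adj_col_mul_unitary W_unit.
split; [|split]; last 1 first.
- move=> c c'; rewrite /rank_one_family mulmxA -(mulmxA (col c W)) W_orth.
  by case: eqP => [-> | _]; rewrite ?mulmx1 // raddf0 mulmx0 mul0mx.
- move=> c; split; last by rewrite /rank_one_family adj_mul adjK.
  by rewrite /rank_one_family mulmxA -(mulmxA (col c W)) W_orth eqxx mulmx1.
- by rewrite sum_rank_one_family.
Qed.

Lemma fine_graining_rank_one_family (m : nat) (P : 'I_m -> 'M[C]_d) W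
    (f : 'I_d -> 'I_m) :
  exh_excl P -> W *m adj W = 1%:M -> (forall c, P (f c) *m col c W = col c W) ->
  fine_graining P (rank_one_family W).
Proof.
move=> [_ [_ P_orth]] W_coisom W_in a; exists [set c | f c == a].
rewrite -[LHS]mulmx1 -W_coisom -sum_rank_one_family mulmx_sumr big_mkcond /=.
rewrite [RHS]big_mkcond /=; apply: eq_bigr => c _.
rewrite inE /rank_one_family mulmxA -{1}(W_in c) mulmxA P_orth.
by rewrite eq_sym; case: eqP => [<- | _]; rewrite ?W_in ?mul0mx.
Qed.

End Eigenbasis.

Lemma adapted_unitary_bases (C : numClosedFieldType) (d n : nat)
    (m : 'I_n -> nat) (psi : 'cV[C]_d) (s : forall j : 'I_n, 'I_(m j) -> 'M[C]_d) :
  (forall j, exh_excl (s j)) ->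
  (forall al be : history m, al <> be ->
     adj (branch psi s be n) *m branch psi s al n = 0) ->
  exists (W : 'I_n -> 'M[C]_d) (f : forall j : 'I_n, 'I_d -> 'I_(m j)),
  [/\ forall j, adj (W j) *m W j = 1%:M, forall j, W j *m adj (W j) = 1%:M,
      forall j c, s j (f j c) *m col c (W j) = col c (W j) &
      forall j c (al : history m),
        along_or_orthogonal (col c (W j)) (branch psi s al j.+1)].
Proof.
move=> s_ee orth; have s_sum j : \sum_a s j a = 1%:M by have [_ []] := s_ee j.
have branch_in j (al : history m) :
    exists a, s j a *m branch psi s al j.+1 = branch psi s al j.+1.
  by exists (al j); apply: branchS_fixed; have [] := s_ee j.
have branch_dich j (al be : history m) :=
  branch_eq_or_orthogonal s_sum orth al be (ltn_ord j).
have [W W_basis] := fin_all_exists (fun j : 'I_n => adapted_orthonormal_basis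
  (x := fun g : {dffun forall i : 'I_n, 'I_(m i)} => branch psi s g j.+1)
  (s_ee j) (fun g => branch_in j g) (fun g g' => branch_dich j g g')).
have col_in j : exists g : 'I_d -> 'I_(m j),
    forall c, s j (g c) *m col c (W j) = col c (W j).
  by have [_ _ /fin_all_exists] := W_basis j.
have [f W_in] := fin_all_exists col_in.
exists W, f; split=> // [j | j | j c al]; first by have [] := W_basis j.
  by have [] := W_basis j.
have [_ _ _ /(_ (finfun al) c)] := W_basis j.
by rewrite (@branch_eq _ _ _ _ psi _ _ al) // => i _; rewrite ffunE.
Qed.

Section Refinement.
Variables (C : numClosedFieldType) (d n : nat) (m : 'I_n -> nat).
Variables (psi : 'cV[C]_d) (s : forall j : 'I_n, 'I_(m j) -> 'M[C]_d).
Arguments s : clear implicits.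
Variables (W : 'I_n -> 'M[C]_d) (f : forall j : 'I_n, 'I_d -> 'I_(m j)).
Hypothesis s_herm : forall j a, adj (s j a) = s j a.
Hypothesis W_unit : forall j, adj (W j) *m W j = 1%:M.
Hypothesis W_in : forall j c, s j (f j c) *m col c (W j) = col c (W j).
Hypothesis W_adapted : forall j c (al : history m),
  along_or_orthogonal (col c (W j)) (branch psi s al j.+1).

Local Notation fine_hist := (history (fun _ : 'I_n => d)).
Local Notation s' := (fun j : 'I_n => rank_one_family (W j)).

Definition coarsen (g : fine_hist) : history m := fun j => f j (g j).

Lemma rank_one_family_mulE j c (v : 'cV[C]_d) :
  rank_one_family (W j) c *m v =
  col c (W j) *m (adj (col c (W j)) *m (s j (f j c) *m v)).
Proof.
have adj_w : adj (col c (W j)) = adj (col c (W j)) *m s j (f j c).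
  by rewrite -{1}(W_in j c) adj_mul s_herm.
by rewrite /rank_one_family {1}adj_w -!mulmxA.
Qed.

Lemma branch_refinedS g (j : 'I_n) :
  branch psi s' g j = branch psi s (coarsen g) j ->
  branch psi s' g j.+1 =
  col (g j) (W j) *m (adj (col (g j) (W j)) *m branch psi s (coarsen g) j.+1).
Proof. by move=> eq_gj; rewrite branchS eq_gj rank_one_family_mulE -branchS. Qed.

Lemma branch_coarsen g k :
  branch psi s' g k = 0 \/ branch psi s' g k = branch psi s (coarsen g) k.
Proof.
elim: k => [|k [IHk | IHk]]; [by right | by left; apply: branchS_eq0 |].
have [lt_kn | le_nk] := ltnP k n; last by right; rewrite !branchS_ge.
rewrite (@branch_refinedS g (Ordinal lt_kn) IHk).
have [-> | ->] := W_adapted (Ordinal lt_kn) (g (Ordinal lt_kn)) (coarsen g).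
  by left; rewrite mulmx0.
by right.
Qed.

Lemma coarsen_prefix_inj g g' k :
  branch psi s' g k != 0 -> branch psi s' g' k != 0 ->
  (forall i : 'I_n, (i < k)%N -> coarsen g i = coarsen g' i) ->
  forall i : 'I_n, (i < k)%N -> g i = g' i.
Proof.
elim: k => [// | k IHk] nz_g nz_g' eq_cgk.
have {IHk} eq_gk : forall i : 'I_n, (i < k)%N -> g i = g' i.
  apply: IHk => [||i lt_ik]; last exact/eq_cgk/ltnW.
    by apply: contra nz_g => /eqP/branchS_eq0 ->.
  by apply: contra nz_g' => /eqP/branchS_eq0 ->.
move=> i; rewrite ltnS leq_eqVlt => /orP[/eqP ik | ]; last exact: eq_gk.
subst k; have [g0 | eq_g] := branch_coarsen g i.
  by rewrite branchS_eq0 ?eqxx in nz_g.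
have eq_g' : branch psi s' g' i = branch psi s (coarsen g') i.
  rewrite -(branch_eq _ _ eq_gk) eq_g.
  by apply: branch_eq => j lt_ji; apply/eq_cgk/ltnW.
have same_x : branch psi s (coarsen g') i.+1 = branch psi s (coarsen g) i.+1.
  by apply: branch_eq => j lt_ji; apply/esym/eq_cgk.
have := branch_refinedS eq_g'; have := branch_refinedS eq_g; rewrite same_x.
set x := branch psi s _ i.+1; set w := col (g i) _; set w' := col (g' i) _ => Eg Eg'.
have x_w : w *m (adj w *m x) = x.
  have [w_x0 | //] := W_adapted i (g i) (coarsen g).
  by rewrite Eg w_x0 mulmx0 eqxx in nz_g.
(* Distinct fine alternatives inside one coarse alternative project the same
   vector onto orthogonal lines, so one of the two refined branches vanishes. *)
have [// | ne_g] := eqVneq (g i) (g' i).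
have w'w : adj w' *m w = 0.
  by rewrite adj_col_mul_unitary // eq_sym (negbTE ne_g) raddf0.
by rewrite Eg' -x_w (mulmxA (adj w')) w'w mul0mx mulmx0 eqxx in nz_g'.
Qed.

Lemma branch_refined_orthogonal :
  (forall al be : history m, al <> be ->
     adj (branch psi s be n) *m branch psi s al n = 0) ->
  forall g g' : fine_hist, g <> g' ->
  adj (branch psi s' g' n) *m branch psi s' g n = 0.
Proof.
move=> orth g g' ne_gg'.
have [-> | nz_g] := eqVneq (branch psi s' g n) 0; first by rewrite mulmx0.
have [-> | nz_g'] := eqVneq (branch psi s' g' n) 0; first by rewrite adj0 mul0mx.
have [g0 | ->] := branch_coarsen g n; first by rewrite g0 eqxx in nz_g.
have [g'0 | ->] := branch_coarsen g' n; first by rewrite g'0 eqxx in nz_g'.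
apply: orth => eq_c; apply: ne_gg'; apply: functional_extensionality_dep => j.
by apply: (coarsen_prefix_inj nz_g nz_g') => // i _; rewrite eq_c.
Qed.

End Refinement.

Theorem theorem1 (C : numClosedFieldType) (d : nat) (psi : 'cV[C]_d)
  (n : nat) (m : 'I_n -> nat) (sigma : forall j : 'I_n, 'I_(m j) -> 'M[C]_d) :
  adj psi *m psi = 1%:M ->
  medium_consistent (psi *m adj psi) sigma ->
  exists (m' : 'I_n -> nat) (sigma' : forall j : 'I_n, 'I_(m' j) -> 'M[C]_d),
    medium_consistent (psi *m adj psi) sigma' /\
    (forall j : 'I_n, fine_graining (sigma j) (sigma' j)) /\
    (forall (j : 'I_n) (k : 'I_(m' j)), exists phi : 'cV[C]_d,
        adj phi *m phi = 1%:M /\ sigma' j k = phi *m adj phi).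
Proof.
move=> _ cons; have sigma_ee := cons.1.
have orth := (medium_consistent_pure psi sigma_ee).1 cons.
have [W [f [W_unit W_coisom W_in W_adapted]]] := adapted_unitary_bases sigma_ee orth.
exists (fun _ => d), (fun j => rank_one_family (W j)); split; [|split].
- apply/medium_consistent_pure => [j|]; first exact: exh_excl_rank_one_family.
  apply: branch_refined_orthogonal W_unit W_in W_adapted orth.
  by move=> j a; apply: exh_excl_adj.
- move=> j; exact: fine_graining_rank_one_family.
- move=> j c; exists (col c (W j)); split=> //.
  by rewrite adj_col_mul_unitary ?eqxx.
Qed.
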